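(* Let $k\ge1$, $G=(V,E)$ an inductively $k$-independent graph with $k$-independence ordering $v_1,\dots,v_n$, $f:2^V\to\mathbb{R}_{\ge0}$ monotone submodular with $f(\emptyset)=0$, and $\beta>0$. Let $w_1,\dots,w_n$ and $S_{\mathrm{out}}$ be produced by algorithm PD-MON (described in the context). Then $f(S_{\mathrm{out}})\ge\sum_{i=1}^n w_i$.
   Context: $N(v)$ is the neighbourhood of $v$ (excluding $v$); $G$ is inductively $k$-independent with $k$-independence ordering $v_1,\dots,v_n$ if for every $i$, $G[N(v_i)\cap\{v_i,\dots,v_n\}]$ has no independent set of size more than $k$. For $S\subseteq V$, $f_S(v)=f(S\cup\{v\})-f(S)$. Algorithm PD-MON (parameter $\beta>0$). Phase 1: start with $S=\emptyset$ (a stack) and $w_1=\dots=w_n=0$. For $i=1,\dots,n$: let $C_i=N(v_i)\cap S$ for the current $S$; if $f_S(v_i)>(1+\beta)\sum_{v_j\in C_i}w_j$, set $w_i=f_S(v_i)-\sum_{v_j\in C_i}w_j$ (with $S$ the set before insertion) and push $v_i$ onto $S$; otherwise leave $w_i=0$. Let $S_{\mathrm{end}}$ be $S$ at the end of Phase 1. Phase 2: with $S_{\mathrm{out}}=\emptyset$, pop vertices of $S_{\mathrm{end}}$ in reverse insertion order, adding a popped $v$ to $S_{\mathrm{out}}$ whenever $S_{\mathrm{out}}\cup\{v\}$ is independent. Output $S_{\mathrm{out}}$. *)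

From HB Require Import structures.
From mathcomp Require Import all_boot all_order all_algebra.
From mathcomp Require Import reals.
Set Implicit Arguments. Unset Strict Implicit. Unset Printing Implicit Defensive.
Import Order.TTheory GRing.Theory Num.Theory.
Local Open Scope ring_scope.

Section PDMON.
Variable V : finType.

Definition simple_graph (e : rel V) : Prop := symmetric e /\ irreflexive e.

Definition independent (e : rel V) (A : {set V}) : bool :=
  [forall x in A, forall y in A, ~~ e x y].

Definition is_ordering (vs : seq V) : Prop := uniq vs /\ forall v, v \in vs.

Definition inductively_k_independent (e : rel V) (k : nat) (vs : seq V) : Prop :=
  forall v : V, forall A : {set V},
    A \subset [set u | e v u & (index v vs <= index u vs)%N] ->
    independent e A -> (#|A| <= k)%N.

Variable R : realType.

Definition monotone (f : {set V} -> R) : Prop :=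
  forall A B : {set V}, A \subset B -> f A <= f B.
Definition submodular (f : {set V} -> R) : Prop :=
  forall A B : {set V}, f (A :|: B) + f (A :&: B) <= f A + f B.

Definition marg (f : {set V} -> R) (S : {set V}) (v : V) : R :=
  f (v |: S) - f S.

(* Phase 1 state: the stack (head = most recently pushed) and the weights *)
Definition phase1_step (e : rel V) (f : {set V} -> R) (beta : R)
    (st : seq V * (V -> R)) (v : V) : seq V * (V -> R) :=
  let: (stk, w) := st in
  let Sset := [set x in stk] in
  let sC := \sum_(u in [set x in stk | e v x]) w u in
  let m := marg f Sset v in
  if m > (1 + beta) * sC
  then (v :: stk, fun x => if x == v then m - sC else w x)
  else (stk, w).

Definition phase1 e f beta (vs : seq V) : seq V * (V -> R) :=
  foldl (phase1_step e f beta) ([::], fun _ => 0) vs.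

Definition pdmon_weights e f beta vs : V -> R := (phase1 e f beta vs).2.

(* Phase 2: pop in reverse insertion order (stack order) *)
Definition phase2_step (e : rel V) (Sout : {set V}) (v : V) : {set V} :=
  if independent e (v |: Sout) then v |: Sout else Sout.

Definition pdmon_out e f beta vs : {set V} :=
  foldl (phase2_step e) set0 (phase1 e f beta vs).1.

End PDMON.

From mathcomp Require Import all_boot all_order all_algebra.
From mathcomp Require Import reals.
From mathcomp Require Import lra.
Import Order.TTheory GRing.Theory Num.Theory.

(* Every vertex u pushed in Phase 1 satisfies f_{S_u}(u) = w_u + sum_{x in C_u} w_x,
   where S_u is the stack below u and C_u the neighbours of u in it.  A pushed vertex x
   either enters S_out or is rejected because of a neighbour u popped before it, i.e.
   pushed after it, so that x lies in C_u.  Hence, weights being nonnegative,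
   sum_i w_i <= sum_{u in S_out} f_{S_u}(u).  By submodularity
   f_{S_u}(u) <= f_{S_out /\ S_u}(u), and the latter marginals telescope to f(S_out). *)

Set Implicit Arguments. Unset Strict Implicit. Unset Printing Implicit Defensive.
Local Open Scope ring_scope.

Section Below.
Variable V : eqType.

Definition below (s : seq V) (u : V) : seq V := drop (index u s).+1 s.

Lemma below_head (s : seq V) h : below (h :: s) h = s.
Proof. by rewrite /below /= eqxx drop0. Qed.

Lemma below_cons (s : seq V) h u : u != h -> below (h :: s) u = below s u.
Proof. by rewrite /below /= eq_sym => /negbTE ->. Qed.

Lemma below_sub (s : seq V) u : {subset below s u <= s}.
Proof. by move=> x /mem_drop. Qed.

Lemma mem_below (s : seq V) u x : x \in below s u -> u \in s.
Proof.
move=> x_below; rewrite -index_mem ltnNge; apply/negP => s_le.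
by rewrite /below drop_oversize ?in_nil // in x_below; apply: leqW.
Qed.

End Below.

Section Cover.
Variables (R : numDomainType) (I J : finType).

Lemma ler_sum_cover (w : I -> R) (P : J -> {set I}) (O : {set J}) :
    (forall x, 0 <= w x) -> (forall x, w x != 0 -> exists2 u, u \in O & x \in P u) ->
  \sum_x w x <= \sum_(u in O) \sum_(x in P u) w x.
Proof.
move=> w_ge0 w_cover.
under [X in _ <= X]eq_bigr do rewrite big_mkcond.
rewrite exchange_big /=; apply: ler_sum => x _; rewrite -big_mkcondr.
have [-> | /w_cover [u uO xPu]] := eqVneq (w x) 0; first exact: sumr_ge0.
by rewrite (bigD1 u) ?uO //= lerDl sumr_ge0.
Qed.

End Cover.

Section Submodular.
Variables (V : finType) (R : realType) (f : {set V} -> R).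
Hypothesis f_submod : submodular f.

Lemma marg_antitone (A B : {set V}) v :
  A \subset B -> v \notin B -> marg f B v <= marg f A v.
Proof.
move=> AB vB; have := f_submod (v |: A) B.
have -> : (v |: A) :|: B = v |: B by rewrite -setUA (setUidPr AB).
have -> : (v |: A) :&: B = A.
  rewrite setIUl (setIidPl AB) (_ : [set v] :&: B = set0) ?set0U //.
  by rewrite disjoint_setI0 // disjoints1.
rewrite /marg; lra.
Qed.

Lemma sum_marg_below_le (s : seq V) (X : {set V}) :
    uniq s -> X \subset [set x in s] ->
  \sum_(u in X) marg f [set x in below s u] u <= f X - f set0.
Proof.
elim: s X => [|h s IH] X /=.
  by move=> _; rewrite set_nil subset0 => /eqP ->; rewrite big_set0 subrr.
case/andP=> h_s s_uniq X_sub.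
have XD_sub : X :\ h \subset [set x in s].
  apply/subsetP => x; rewrite !inE => /andP [xh /(subsetP X_sub)].
  by rewrite !inE (negbTE xh).
have below_XD : \sum_(u in X :\ h) marg f [set x in below (h :: s) u] u
              = \sum_(u in X :\ h) marg f [set x in below s u] u.
  by apply: eq_bigr => u; rewrite !inE => /andP [uh _]; rewrite below_cons.
have [hX | hX] := boolP (h \in X); last first.
  have XD : X :\ h = X by apply/setDidPl; rewrite disjoint_sym disjoints1.
  by have := IH _ s_uniq XD_sub; rewrite -below_XD XD.
rewrite (big_setD1 h hX) /= below_XD below_head.
have h_notin : h \notin [set x in s] by rewrite inE.
have := marg_antitone XD_sub h_notin; rewrite /marg setD1K //.
have := IH _ s_uniq XD_sub; lra.
Qed.

End Submodular.

Section Phase1.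
Variables (V : finType) (R : realType) (e : rel V) (f : {set V} -> R) (beta : R).
Hypothesis beta_ge0 : 0 <= beta.

(* A stack lists the pushed vertices, latest first, so that [below s u] is the stack
   at the time [u] was pushed. *)
Definition charged_stack (w : V -> R) (s : seq V) : Prop :=
  uniq s /\ {in s, forall u, marg f [set x in below s u] u =
                             w u + \sum_(x in [set x in below s u | e u x]) w x}.

Definition phase1_inv (st : seq V * (V -> R)) : Prop :=
  [/\ charged_stack st.2 st.1, forall x, x \notin st.1 -> st.2 x = 0 & forall x, 0 <= st.2 x].

Lemma phase1_step_stack st v : {subset (phase1_step e f beta st v).1 <= v :: st.1}.
Proof.
case: st => stk w x; rewrite /phase1_step; case: ifP => //= _ x_stk.
by rewrite inE x_stk orbT.
Qed.

Lemma phase1_step_inv st v :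
  v \notin st.1 -> phase1_inv st -> phase1_inv (phase1_step e f beta st v).
Proof.
case: st => stk w /= v_new [[stk_uniq w_marg] w_supp w_ge0]; rewrite /phase1_step.
set C := [set x in stk | e v x]; set sC := \sum_(u in C) w u.
set m := marg f _ v; case: ifP => [m_gt | _]; last by split.
set w' := fun x => if x == v then m - sC else w x.
have w'_stk x : x \in stk -> w' x = w x.
  by rewrite /w'; case: eqP => // -> v_stk; rewrite v_stk in v_new.
split => /=.
- split; first by rewrite /= v_new.
  move=> u; rewrite inE => /predU1P [-> | u_stk].
    rewrite below_head (eq_bigr w) => [|x /[!inE] /andP [x_stk _]]; last exact: w'_stk.
    by rewrite /w' eqxx subrK.
  have uv : u != v by apply: contraNneq v_new => <-.
  rewrite below_cons // w'_stk // (eq_bigr w) => [|x /[!inE] /andP [/below_sub x_stk _]].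
    exact: w_marg.
  exact: w'_stk.
- by move=> x; rewrite inE negb_or => /andP [xv x_stk]; rewrite /w' (negbTE xv); apply: w_supp.
- move=> x; rewrite /w'; case: eqP => // _.
  have : 0 <= beta * sC by apply: mulr_ge0 => //; apply: sumr_ge0.
  by move: m_gt; rewrite mulrDl mul1r; lra.
Qed.

Lemma phase1_inv_foldl vs st :
    uniq vs -> {in vs, forall v, v \notin st.1} -> phase1_inv st ->
  phase1_inv (foldl (phase1_step e f beta) st vs).
Proof.
elim: vs st => [//|v vs IH] st /= /andP [v_vs vs_uniq] fresh inv.
apply: IH => //; last exact: phase1_step_inv (fresh v (mem_head _ _)) inv.
move=> x x_vs; apply/negP => /phase1_step_stack; rewrite inE => /predU1P [xv | x_stk].
  by rewrite -xv x_vs in v_vs.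
by have := fresh x; rewrite inE x_vs orbT x_stk => /(_ isT).
Qed.

Lemma phase1_invariant vs : uniq vs -> phase1_inv (phase1 e f beta vs).
Proof. by move=> vs_uniq; apply: phase1_inv_foldl. Qed.

End Phase1.

Section Phase2.
Variables (V : finType) (e : rel V).

Definition closed_nbhd_below (s : seq V) (u : V) : {set V} :=
  u |: [set x in below s u | e u x].

Lemma phase2_step_sup (O : {set V}) v : O \subset phase2_step e O v.
Proof. by rewrite /phase2_step; case: ifP => // _; apply: subsetUr. Qed.

Lemma phase2_step_sub (O : {set V}) v : phase2_step e O v \subset v |: O.
Proof. by rewrite /phase2_step; case: ifP => // _; apply: subsetUr. Qed.

Lemma independent_phase2_step (O : {set V}) v :
  independent e O -> independent e (phase2_step e O v).
Proof. by rewrite /phase2_step; case: ifP. Qed.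

Lemma phase2_step_conflict (O : {set V}) v : simple_graph e -> independent e O ->
  v \notin phase2_step e O v -> exists2 u, u \in O & e u v.
Proof.
move=> [e_sym e_irr] O_ind v_out.
have : ~~ independent e (v |: O).
  by apply: contraNN v_out => vO_ind; rewrite /phase2_step vO_ind setU11.
case/forall_inPn => a aO /forall_inPn [b bO]; rewrite negbK => e_ab.
move: aO bO e_ab; rewrite !inE => /predU1P [-> | aO] /predU1P [-> | bO] e_ab.
- by rewrite e_irr in e_ab.
- by exists b; rewrite // e_sym.
- by exists a.
- by move/forall_inP/(_ a aO)/forall_inP/(_ b bO): O_ind; rewrite e_ab.
Qed.

Lemma sub_phase2 (O : {set V}) s : O \subset foldl (phase2_step e) O s.
Proof.
elim: s O => [|v s IH] O /=; first exact: subxx.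
exact: subset_trans (phase2_step_sup O v) (IH _).
Qed.

Lemma phase2_sub (O : {set V}) s : foldl (phase2_step e) O s \subset O :|: [set x in s].
Proof.
elim: s O => [|v s IH] O /=; first by rewrite set_nil setU0.
by apply: (subset_trans (IH _)); rewrite set_cons setUA setSU // setUC phase2_step_sub.
Qed.

Lemma phase2_cover (O : {set V}) s : simple_graph e -> uniq s -> independent e O ->
  {in s, forall x, exists2 u, u \in foldl (phase2_step e) O s &
                             (u \in O) && e u x || (x \in closed_nbhd_below s u)}.
Proof.
move=> e_simple; elim: s O => [//|h s IH] O /= /andP [h_s s_uniq] O_ind x.
set O1 := phase2_step e O h; have O1_sub := sub_phase2 O1 s.
rewrite inE => /predU1P [-> | x_s].
  have [hO1 | h_out] := boolP (h \in O1).
    by exists h; [apply: (subsetP O1_sub) | rewrite setU11 orbT].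
  have [u uO e_uh] := phase2_step_conflict e_simple O_ind h_out.
  exists u; last by rewrite uO e_uh.
  exact/(subsetP O1_sub)/(subsetP (phase2_step_sup O h)).
have [u uO' u_cov] := IH O1 s_uniq (independent_phase2_step h O_ind) x x_s.
exists u => //; case/orP: u_cov => [/andP [uO1 e_ux] | x_nbhd].
  move: (subsetP (phase2_step_sub O h) u uO1); rewrite !inE.
  case/predU1P => [u_h | uO]; last by rewrite uO e_ux.
  by rewrite u_h below_head x_s -u_h e_ux !orbT.
have u_s : u \in s.
  by move: x_nbhd; rewrite !inE => /predU1P [<- // | /andP [/mem_below]].
have u_h : u != h by apply: contraNneq h_s => <-.
by rewrite /closed_nbhd_below below_cons // x_nbhd orbT.
Qed.

End Phase2.

Theorem lemma3 (R : realType) (V : finType) (e : rel V) (k : nat)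
  (vs : seq V) (f : {set V} -> R) (beta : R) :
  (1 <= k)%N ->
  simple_graph e ->
  is_ordering vs ->
  inductively_k_independent e k vs ->
  (forall A, 0 <= f A) ->
  monotone f -> submodular f -> f set0 = 0 ->
  0 < beta ->
  \sum_(v <- vs) pdmon_weights e f beta vs v <= f (pdmon_out e f beta vs).
Proof.
move=> _ e_simple [vs_uniq vs_all] _ _ _ f_submod f0 beta_gt0.
rewrite /pdmon_weights /pdmon_out.
have := phase1_invariant e f (ltW beta_gt0) vs_uniq.
case: (phase1 e f beta vs) => s w [[/= s_uniq w_marg] w_supp w_ge0].
set O := foldl _ set0 s.
have O_sub : O \subset [set x in s] by rewrite -[[set x in s]]set0U phase2_sub.
have set0_ind : independent e set0 by apply/forall_inP => x; rewrite inE.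
have w_cover x : w x != 0 -> exists2 u, u \in O & x \in closed_nbhd_below e s u.
  move=> wx; have x_s : x \in s by apply: contraNT wx => /w_supp ->.
  have [u uO] := phase2_cover e_simple s_uniq set0_ind x_s.
  by rewrite inE /= => x_nbhd; exists u.
rewrite big_uniq // (eq_bigl predT) => [|x]; last by rewrite vs_all.
apply: le_trans (ler_sum_cover w_ge0 w_cover) _.
have charge_eq u : u \in O ->
    \sum_(x in closed_nbhd_below e s u) w x = marg f [set x in below s u] u.
  move=> /(subsetP O_sub); rewrite inE => u_s.
  by rewrite w_marg // /closed_nbhd_below big_setU1 // inE (proj2 e_simple) andbF.
rewrite (eq_bigr _ charge_eq).
by have := sum_marg_below_le f_submod s_uniq O_sub; rewrite f0 subr0.
Qed.
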